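(* Let $y\in\ell^2$. Suppose that for every $q\in\mathbb Q^{<\omega}$, every rational $\varepsilon>0$ and every $m\in\omega$ there exist $n\le k$ in $\omega$ with $n\ge m$ and $k-n\ge m$ such that $\lVert (2^n y\upharpoonright[k,k+|q|)) - q\rVert_\infty<\varepsilon|q|^{-1/2}$ and $\lVert y\upharpoonright[k+|q|,\infty)\rVert_2<\varepsilon 2^{-k}$. Then $y$ is nicely hypercyclic.
   Context: $\omega=\{0,1,2,\dots\}$; $\ell^2$ is the Hilbert space of square-summable real sequences indexed by $\omega$. For a (finite or infinite) real string $s$, $\lVert s\rVert_2$ and $\lVert s\rVert_\infty$ denote its $2$-norm and sup-norm, $|s|$ its length; $y\upharpoonright[k,k+|q|)$ is regarded as a string of length $|q|$ indexed from $0$ and compared to $q$ coordinatewise; when $q$ is empty, conditions comparing an empty string to $q$ in $\lVert\cdot\rVert_\infty$ are vacuous. For nonempty $q\in\mathbb Q^{<\omega}$ and rational $\varepsilon>0$, $U_{q,\varepsilon}=\{x\in\ell^2:\lVert (x\upharpoonright|q|)-q\rVert_\infty<\varepsilon|q|^{-1/2}\text{ and }\lVert x\upharpoonright[|q|,\infty)\rVert_2<\varepsilon\}$; for $q$ empty, $U_{q,\varepsilon}=\{x:\lVert x\rVert_2<\varepsilon\}$. For $w\in\mathbb R^\omega$, $B_w(x)(i)=w(i)x(i+1)$. A function $w$ on $\omega$ is $n$-nice at $k$ if $w(i)=w(k+i)$ for all $i<n$. $B_w^k$ maps $y$ nicely into $U_{q,\varepsilon}$ if $B_w^k(y)\in U_{q,\varepsilon}$,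 $w$ is $|q|$-nice at $k$, and $\lVert y\upharpoonright[k+|q|,\infty)\rVert_2<\varepsilon 2^{-k}$. $y$ is nicely hypercyclic for $w$ if for every $U_{q,\varepsilon}$ there is $k$ such that $B_w^k$ maps $y$ nicely into $U_{q,\varepsilon}$; $y$ is nicely hypercyclic if it is nicely hypercyclic for some $w\in\{1,2\}^\omega$. *)

From Stdlib Require Import Reals Lra QArith Qreals List.
From Coquelicot Require Import Coquelicot.
Open Scope R_scope.

Definition seqR := nat -> R.

Definition in_l2 (x : seqR) : Prop := ex_series (fun i => (x i) ^ 2).

Definition tail_norm2 (x : seqR) (k : nat) : R :=
  sqrt (Series (fun i => (x (k + i)%nat) ^ 2)).

Definition norm2 (x : seqR) : R := tail_norm2 x 0.

(* || (x |` [k, k+|q|)) - q ||_inf < c, written coordinatewise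
   (sup of finitely many values < c iff each value < c; vacuous for q = nil). *)
Definition sup_close (x : seqR) (k : nat) (q : list Q) (c : R) : Prop :=
  forall i, (i < length q)%nat -> Rabs (x (k + i)%nat - Q2R (nth i q 0%Q)) < c.

Definition inv_sqrt_len (q : list Q) : R := / sqrt (INR (length q)).

Definition U (q : list Q) (eps : Q) (x : seqR) : Prop :=
  match q with
  | nil => norm2 x < Q2R eps
  | _ :: _ =>
      sup_close x 0 q (Q2R eps * inv_sqrt_len q) /\
      tail_norm2 x (length q) < Q2R eps
  end.

Definition Bw (w : seqR) (x : seqR) : seqR := fun i => w i * x (S i).

Definition Bw_iter (w : seqR) (k : nat) (x : seqR) : seqR := Nat.iter k (Bw w) x.

Definition nice (w : seqR) (n k : nat) : Prop :=
  forall i, (i < n)%nat -> w i = w (k + i)%nat.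

Definition maps_nicely (w : seqR) (k : nat) (y : seqR) (q : list Q) (eps : Q) : Prop :=
  U q eps (Bw_iter w k y) /\ nice w (length q) k /\
  tail_norm2 y (k + length q) < Q2R eps * / 2 ^ k.

Definition nicely_hypercyclic_for (w : seqR) (y : seqR) : Prop :=
  forall (q : list Q) (eps : Q), (0 < eps)%Q ->
    exists k : nat, maps_nicely w k y q eps.

Definition nicely_hypercyclic (y : seqR) : Prop :=
  exists w : seqR, (forall i, w i = 1 \/ w i = 2) /\ nicely_hypercyclic_for w y.

From Stdlib Require Import Reals QArith Qreals List Lia Lra Cantor ClassicalEpsilon FinFun.
From Coquelicot Require Import Coquelicot.
Open Scope R_scope.

(* Enumerate the pairs (q, eps).  The weight w in {1,2}^omega is built as a
   bit sequence (bit true = weight 2) in stages: at stage j, with current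
   prefix of length L and (q, eps) the j-th pair, the hypothesis with
   m = L + |q| + 1 yields n <= k with n, k - n >= m.  Pad the prefix to a
   block of length k containing exactly n ones, then append a copy of the
   first |q| bits of the block.  Now w is |q|-nice at k, and for i < |q|
   the product w(i) ... w(i+k-1) equals the product over the block, 2^n, so
   B_w^k y agrees with 2^n y on [k, k+|q|).  As all weights are at most 2,
   the l^2-tail of B_w^k y past |q| is at most 2^k times the tail of y past
   k + |q|, which is below eps. *)

Fixpoint weight_prod (w : seqR) (a k : nat) : R :=
  match k with
  | O => 1
  | S k => w a * weight_prod w (S a) k
  end.

Lemma Bw_iter_weight_prod (w : seqR) (k : nat) (y : seqR) (i : nat) :
  Bw_iter w k y i = weight_prod w i k * y (i + k)%nat.
Proof.
  unfold Bw_iter; revert i; induction k as [|k IH]; intro i; simpl.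
  - rewrite Nat.add_0_r; ring.
  - unfold Bw at 1; rewrite IH, Nat.add_succ_r; simpl; ring.
Qed.

Lemma weight_prod_add (w : seqR) (a b c : nat) :
  weight_prod w a (b + c) = weight_prod w a b * weight_prod w (a + b) c.
Proof.
  revert a; induction b as [|b IH]; intro a; simpl.
  - rewrite Nat.add_0_r; ring.
  - rewrite IH, Nat.add_succ_r; simpl; ring.
Qed.

Lemma weight_prod_ext (w : seqR) (a a' c : nat) :
  (forall t, (t < c)%nat -> w (a + t)%nat = w (a' + t)%nat) ->
  weight_prod w a c = weight_prod w a' c.
Proof.
  revert a a'; induction c as [|c IH]; intros a a' Hw; cbn [weight_prod]; [reflexivity|].
  f_equal.
  - rewrite <- (Nat.add_0_r a), <- (Nat.add_0_r a'); apply Hw; lia.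
  - apply IH; intros t Ht; specialize (Hw (S t)); rewrite !Nat.add_succ_r in Hw; apply Hw; lia.
Qed.

(* The window [i, i + k) is [i, k) followed by [k, k + i), a copy of [0, i). *)
Lemma weight_prod_nice (w : seqR) (L k i : nat) :
  nice w L k -> (i <= L)%nat -> (i <= k)%nat -> weight_prod w i k = weight_prod w 0 k.
Proof.
  intros Hnice HiL Hik.
  replace k with (i + (k - i))%nat at 2 by lia.
  replace k with ((k - i) + i)%nat at 1 by lia.
  rewrite !weight_prod_add, Nat.add_0_l, Rmult_comm.
  replace (i + (k - i))%nat with k by lia.
  f_equal; apply weight_prod_ext; intros t Ht; symmetry; apply Hnice; lia.
Qed.

Lemma Rabs_weight_prod_le (w : seqR) (c : R) (a k : nat) :
  (forall i, Rabs (w i) <= c) -> Rabs (weight_prod w a k) <= c ^ k.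
Proof.
  intro Hw; revert a; induction k as [|k IH]; intro a; cbn [weight_prod pow].
  - rewrite Rabs_R1; lra.
  - rewrite Rabs_mult; apply Rmult_le_compat; auto using Rabs_pos.
Qed.

Lemma tail_norm2_Bw_iter_le (w : seqR) (c : R) (k : nat) (y : seqR) (L : nat) :
  in_l2 y -> (forall i, Rabs (w i) <= c) ->
  tail_norm2 (Bw_iter w k y) L <= c ^ k * tail_norm2 y (k + L).
Proof.
  intros hy Hw; unfold tail_norm2.
  assert (Hck : 0 <= c ^ k).
  { eapply Rle_trans; [apply Rabs_pos|apply (Rabs_weight_prod_le w c 0 k Hw)]. }
  assert (Htail : ex_series (fun i => y (k + L + i)%nat ^ 2)).
  { apply (ex_series_incr_n (fun i => y i ^ 2)); exact hy. }
  rewrite <- (sqrt_pow2 (c ^ k) Hck) at 1.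
  rewrite <- sqrt_mult_alt by apply pow2_ge_0.
  apply sqrt_le_1_alt; rewrite <- Series_scal_l.
  apply Series_le; [|exact (ex_series_scal_l _ _ Htail)].
  intro i; rewrite Bw_iter_weight_prod, Rpow_mult_distr.
  replace (L + i + k)%nat with (k + L + i)%nat by lia.
  split; [apply Rmult_le_pos; apply pow2_ge_0|].
  apply Rmult_le_compat_r; [apply pow2_ge_0|].
  rewrite <- pow2_abs; apply pow_incr; split; [apply Rabs_pos|].
  apply Rabs_weight_prod_le, Hw.
Qed.

Definition weight_of (b : nat -> bool) : seqR := fun i => if b i then 2 else 1.

Lemma weight_of_values (b : nat -> bool) (i : nat) : weight_of b i = 1 \/ weight_of b i = 2.
Proof. unfold weight_of; destruct (b i); auto. Qed.

Lemma weight_prod_weight_of (b : nat -> bool) (a : nat) (l : list bool) :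
  (forall i, (i < length l)%nat -> b (a + i)%nat = nth i l false) ->
  weight_prod (weight_of b) a (length l) = 2 ^ count_occ bool_dec l true.
Proof.
  revert a; induction l as [|x l IH]; intros a Hl; [reflexivity|].
  cbn [length weight_prod].
  rewrite IH.
  2: { intros i Hi; specialize (Hl (S i)); rewrite Nat.add_succ_r in Hl; apply Hl; simpl; lia. }
  specialize (Hl 0%nat); rewrite Nat.add_0_r in Hl; unfold weight_of; rewrite Hl by (simpl; lia).
  destruct x; cbn [nth count_occ bool_dec]; simpl; ring.
Qed.

Section PrefixLimit.

Context {A : Type} (d : A) (P : nat -> list A).
Hypothesis P_extends : forall j, exists t, P (S j) = P j ++ t.
Hypothesis P_grows : forall j, (length (P j) < length (P (S j)))%nat.

Definition prefix_limit (i : nat) : A := nth i (P (S i)) d.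

Lemma prefix_chain_extends (j j' : nat) : (j <= j')%nat -> exists t, P j' = P j ++ t.
Proof.
  induction 1 as [|j' _ [t IH]]; [exists nil; symmetry; apply app_nil_r|].
  destruct (P_extends j') as [t' E]; exists (t ++ t'); rewrite E, IH, app_assoc; reflexivity.
Qed.

Lemma prefix_chain_length (j : nat) : (j <= length (P j))%nat.
Proof. induction j as [|j IH]; [lia|specialize (P_grows j); lia]. Qed.

Lemma nth_prefix_chain (j j' i : nat) :
  (j <= j')%nat -> (i < length (P j))%nat -> nth i (P j') d = nth i (P j) d.
Proof.
  intros Hj Hi; destruct (prefix_chain_extends j j' Hj) as [t ->]; apply app_nth1, Hi.
Qed.

Lemma prefix_limit_nth (j i : nat) : (i < length (P j))%nat -> prefix_limit i = nth i (P j) d.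
Proof.
  intro Hi; unfold prefix_limit.
  assert (Hi' : (i < length (P (S i)))%nat) by (pose proof (prefix_chain_length (S i)); lia).
  rewrite <- (nth_prefix_chain (S i) (Nat.max j (S i))), <- (nth_prefix_chain j (Nat.max j (S i)));
    auto with arith.
Qed.

End PrefixLimit.

Definition pad_block (p : list bool) (n k : nat) : list bool :=
  let r := (n - count_occ bool_dec p true)%nat in
  p ++ repeat true r ++ repeat false (k - length p - r).

Lemma pad_block_length_count (p : list bool) (n k : nat) :
  (length p <= n)%nat -> (length p + n <= k)%nat ->
  length (pad_block p n k) = k /\ count_occ bool_dec (pad_block p n k) true = n.
Proof.
  intros Hn Hk; pose proof (count_occ_bound bool_dec true p).
  unfold pad_block; rewrite !length_app, !repeat_length, !count_occ_app.
  rewrite (count_occ_repeat_eq _ _ eq_refl), (count_occ_repeat_neq _ _ diff_true_false); lia.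
Qed.

Section Schedule.

Variables (sched : nat -> nat -> nat * nat) (len : nat -> nat).
Hypothesis sched_spec : forall j m,
  (fst (sched j m) <= snd (sched j m))%nat /\ (m <= fst (sched j m))%nat /\
  (m <= snd (sched j m) - fst (sched j m))%nat.

Fixpoint sched_prefix (j : nat) : list bool :=
  match j with
  | O => nil
  | S j =>
      let p := sched_prefix j in
      let nk := sched j (length p + len j + 1) in
      let B := pad_block p (fst nk) (snd nk) in
      B ++ firstn (len j) B
  end.

Definition stage_ones (j : nat) : nat :=
  fst (sched j (length (sched_prefix j) + len j + 1)).
Definition stage_length (j : nat) : nat :=
  snd (sched j (length (sched_prefix j) + len j + 1)).
Definition stage_block (j : nat) : list bool :=
  pad_block (sched_prefix j) (stage_ones j) (stage_length j).

Lemma sched_prefix_S (j : nat) :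
  sched_prefix (S j) = stage_block j ++ firstn (len j) (stage_block j).
Proof. reflexivity. Qed.

Lemma stage_bounds (j : nat) :
  (length (sched_prefix j) + len j < stage_ones j)%nat /\
  (stage_ones j + length (sched_prefix j) + len j < stage_length j)%nat.
Proof.
  unfold stage_ones, stage_length.
  destruct (sched_spec j (length (sched_prefix j) + len j + 1)); lia.
Qed.

Lemma stage_block_length_count (j : nat) :
  length (stage_block j) = stage_length j /\
  count_occ bool_dec (stage_block j) true = stage_ones j.
Proof. pose proof (stage_bounds j); apply pad_block_length_count; lia. Qed.

Lemma sched_prefix_extends (j : nat) : exists t, sched_prefix (S j) = sched_prefix j ++ t.
Proof.
  rewrite sched_prefix_S; unfold stage_block, pad_block.
  eexists; rewrite <- !app_assoc; reflexivity.
Qed.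

Lemma sched_prefix_grows (j : nat) : (length (sched_prefix j) < length (sched_prefix (S j)))%nat.
Proof.
  rewrite sched_prefix_S, length_app, (proj1 (stage_block_length_count j)).
  pose proof (stage_bounds j); lia.
Qed.

Definition sched_bits : nat -> bool := prefix_limit false sched_prefix.

Lemma sched_bits_stage_block (j i : nat) :
  (i < stage_length j)%nat -> sched_bits i = nth i (stage_block j) false.
Proof.
  intro Hi; destruct (stage_block_length_count j) as [Hlen _].
  unfold sched_bits; rewrite (prefix_limit_nth _ _ sched_prefix_extends sched_prefix_grows (S j)).
  - rewrite sched_prefix_S; apply app_nth1; lia.
  - rewrite sched_prefix_S, length_app; lia.
Qed.

Lemma sched_bits_repeat (j i : nat) :
  (i < len j)%nat -> sched_bits (stage_length j + i) = sched_bits i.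
Proof.
  intro Hi; destruct (stage_block_length_count j) as [Hlen _].
  pose proof (stage_bounds j).
  rewrite (sched_bits_stage_block j i) by lia.
  unfold sched_bits; rewrite (prefix_limit_nth _ _ sched_prefix_extends sched_prefix_grows (S j)).
  - rewrite sched_prefix_S, <- Hlen, app_nth2_plus, nth_firstn.
    replace (Nat.ltb i (len j)) with true by (symmetry; apply Nat.ltb_lt; exact Hi).
    reflexivity.
  - rewrite sched_prefix_S, length_app, firstn_length_le; lia.
Qed.

Lemma sched_weight_nice (j : nat) : nice (weight_of sched_bits) (len j) (stage_length j).
Proof. intros i Hi; unfold weight_of; rewrite sched_bits_repeat by exact Hi; reflexivity. Qed.

Lemma sched_weight_prod (j : nat) :
  weight_prod (weight_of sched_bits) 0 (stage_length j) = 2 ^ stage_ones j.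
Proof.
  destruct (stage_block_length_count j) as [Hlen Hcount].
  rewrite <- Hlen at 1; rewrite <- Hcount.
  apply weight_prod_weight_of; intros i Hi; apply sched_bits_stage_block; lia.
Qed.

Lemma len_le_stage_length (j : nat) : (len j <= stage_length j)%nat.
Proof. pose proof (stage_bounds j); lia. Qed.

End Schedule.

Lemma weights_realizing_demands (len : nat -> nat) (demand : nat -> nat -> nat -> Prop) :
  (forall j m, exists n k, (n <= k)%nat /\ (m <= n)%nat /\ (m <= k - n)%nat /\ demand j n k) ->
  exists w : seqR, (forall i, w i = 1 \/ w i = 2) /\
    forall j, exists n k, demand j n k /\ (len j <= k)%nat /\ nice w (len j) k /\
      weight_prod w 0 k = 2 ^ n.
Proof.
  intro Hdemand.
  set (admissible j m (nk : nat * nat) := (fst nk <= snd nk)%nat /\ (m <= fst nk)%nat /\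
         (m <= snd nk - fst nk)%nat /\ demand j (fst nk) (snd nk)).
  set (sched j m := epsilon (inhabits (0, 0)%nat) (admissible j m)).
  assert (Hsched : forall j m, admissible j m (sched j m)).
  { intros j m; apply epsilon_spec.
    destruct (Hdemand j m) as (n & k & H); exists (n, k); exact H. }
  assert (Hspec : forall j m, (fst (sched j m) <= snd (sched j m))%nat /\
            (m <= fst (sched j m))%nat /\ (m <= snd (sched j m) - fst (sched j m))%nat).
  { intros j m; destruct (Hsched j m) as (? & ? & ? & _); auto. }
  exists (weight_of (sched_bits sched len)); split; [apply weight_of_values|].
  intro j; exists (stage_ones sched len j), (stage_length sched len j); split; [|split; [|split]].
  - apply Hsched.
  - apply len_le_stage_length, Hspec.
  - apply sched_weight_nice, Hspec.
  - apply sched_weight_prod, Hspec.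
Qed.

Lemma maps_nicely_of_scaled_window (w y : seqR) (q : list Q) (eps : Q) (n k : nat) :
  in_l2 y -> (forall i, Rabs (w i) <= 2) ->
  (length q <= k)%nat -> nice w (length q) k -> weight_prod w 0 k = 2 ^ n ->
  sup_close (fun i => 2 ^ n * y i) k q (Q2R eps * inv_sqrt_len q) ->
  tail_norm2 y (k + length q) < Q2R eps * / 2 ^ k ->
  maps_nicely w k y q eps.
Proof.
  intros hy Hw Hqk Hnice Hprod Hclose Htail.
  assert (Htail_iter : tail_norm2 (Bw_iter w k y) (length q) < Q2R eps).
  { assert (H2k : 0 < 2 ^ k) by (apply pow_lt; lra).
    eapply Rle_lt_trans; [exact (tail_norm2_Bw_iter_le w 2 k y (length q) hy Hw)|].
    replace (Q2R eps) with (2 ^ k * (Q2R eps * / 2 ^ k)) by (field; lra).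
    apply Rmult_lt_compat_l; [exact H2k|exact Htail]. }
  assert (Hclose_iter : sup_close (Bw_iter w k y) 0 q (Q2R eps * inv_sqrt_len q)).
  { intros i Hi; rewrite Bw_iter_weight_prod, Nat.add_0_l, Nat.add_comm.
    rewrite (weight_prod_nice w (length q) k i Hnice), Hprod by lia.
    apply Hclose, Hi. }
  split; [|split; [exact Hnice|exact Htail]].
  destruct q; [exact Htail_iter|split; [exact Hclose_iter|exact Htail_iter]].
Qed.

Lemma surjective_of_injective_code {A : Type} (a : A) (code : A -> nat) :
  Injective code -> exists e : nat -> A, forall x, e (code x) = x.
Proof.
  intro Hcode; exists (fun j => epsilon (inhabits a) (fun x => code x = j)); intro x.
  apply Hcode, (epsilon_spec (inhabits a) (fun x' => code x' = code x)); exists x; reflexivity.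
Qed.

Definition code_Z (z : Z) : nat := Cantor.to_nat (Z.to_nat z, Z.to_nat (- z)).
Definition code_Q (x : Q) : nat := Cantor.to_nat (code_Z (Qnum x), Pos.to_nat (Qden x)).
Fixpoint code_list {A : Type} (code : A -> nat) (l : list A) : nat :=
  match l with
  | nil => O
  | x :: l => S (Cantor.to_nat (code x, code_list code l))
  end.

Lemma code_Z_inj : Injective code_Z.
Proof. intros z z' H; unfold code_Z in H; apply Cantor.to_nat_inj in H; injection H; lia. Qed.

Lemma code_Q_inj : Injective code_Q.
Proof.
  intros [a b] [a' b'] H; unfold code_Q in H; apply Cantor.to_nat_inj in H; injection H as Ha Hb.
  apply code_Z_inj in Ha; apply Pos2Nat.inj in Hb; subst; reflexivity.
Qed.

Lemma code_list_inj {A : Type} (code : A -> nat) : Injective code -> Injective (code_list code).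
Proof.
  intros Hcode l; induction l as [|x l IH]; intros [|x' l'] H; try discriminate; [reflexivity|].
  cbn [code_list] in H; apply Nat.succ_inj, Cantor.to_nat_inj in H; injection H as Hx Hl.
  apply Hcode in Hx; apply IH in Hl; subst; reflexivity.
Qed.

Lemma basic_sets_enumerable : exists e : nat -> list Q * Q, forall q eps, exists j, e j = (q, eps).
Proof.
  set (code p := Cantor.to_nat (code_list code_Q (fst p), code_Q (snd p))).
  destruct (surjective_of_injective_code (nil, 0%Q) code) as [e He].
  - intros [l x] [l' x'] H; apply Cantor.to_nat_inj in H; injection H as Hl Hx.
    apply (code_list_inj _ code_Q_inj) in Hl; apply code_Q_inj in Hx; subst; reflexivity.
  - exists e; intros q eps; exists (code (q, eps)); apply He.
Qed.

Theorem lemma8 (y : seqR) (hy : in_l2 y) :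
  (forall (q : list Q) (eps : Q) (m : nat), (0 < eps)%Q ->
     exists n k : nat, (n <= k)%nat /\ (m <= n)%nat /\ (m <= k - n)%nat /\
       sup_close (fun i => 2 ^ n * y i) k q (Q2R eps * inv_sqrt_len q) /\
       tail_norm2 y (k + length q) < Q2R eps * / 2 ^ k) ->
  nicely_hypercyclic y.
Proof.
  intro Hreq.
  destruct basic_sets_enumerable as [e He].
  set (demand j n k := let (q, eps) := e j in (0 < eps)%Q ->
         sup_close (fun i => 2 ^ n * y i) k q (Q2R eps * inv_sqrt_len q) /\
         tail_norm2 y (k + length q) < Q2R eps * / 2 ^ k).
  destruct (weights_realizing_demands (fun j => length (fst (e j))) demand) as [w [Hw Hstage]].
  { intros j m; unfold demand; destruct (e j) as [q eps].
    destruct (Qlt_le_dec 0 eps) as [Heps|Heps].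
    - destruct (Hreq q eps m Heps) as (n & k & ? & ? & ? & ?); exists n, k; auto.
    - exists m, (m + m)%nat; split; [lia|split; [lia|split; [lia|]]].
      intro Hpos; exfalso; exact (Qle_not_lt _ _ Heps Hpos). }
  exists w; split; [exact Hw|].
  intros q eps Heps; destruct (He q eps) as [j Hj].
  destruct (Hstage j) as (n & k & Hdemand & Hlen & Hnice & Hprod).
  unfold demand in Hdemand; rewrite Hj in Hdemand, Hlen, Hnice; cbn [fst] in Hlen, Hnice.
  destruct (Hdemand Heps) as [Hclose Htail].
  exists k; apply (maps_nicely_of_scaled_window w y q eps n k); auto.
  intro i; destruct (Hw i) as [-> | ->]; rewrite Rabs_pos_eq; lra.
Qed.
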